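(* Let $X$ be a smooth projective complex toric variety, $J$ a subgroup of $\operatorname{AutP}(X)$, and $W$ the preimage of $J$ in $\operatorname{Aut}(\Sigma)$. There exist isomorphisms \[ H^1(W,M)\cong\operatorname{coker}\left(\operatorname{TDiv}(X)^W\to\operatorname{Pic}(X)^J\right)\cong\operatorname{Am}^T(X,J). \]
   Context: Toric setup: $T$ torus, $N$ cocharacter lattice, $M$ character lattice, $\Sigma$ fan with rays $\rho_1,\ldots,\rho_r$; $\operatorname{TDiv}(X)$ is free on the torus-invariant prime divisors $D_{\rho_j}$, with exact sequence $0\to M\to\operatorname{TDiv}(X)\to\operatorname{Pic}(X)\to0$. $\operatorname{Aut}(\Sigma)$ is the group of lattice automorphisms of $N$ preserving $\Sigma$; it acts on $M$ (dually) and on $\operatorname{TDiv}(X)$ (permuting the $D_{\rho_j}$) compatibly with the sequence, hence on $\operatorname{Pic}(X)$, giving a homomorphism $\operatorname{Aut}(\Sigma)\to\operatorname{Aut}(\operatorname{Pic}(X))$ whose image is $\operatorname{AutP}(X)$, the image of $\operatorname{Aut}(X)\to\operatorname{Aut}(\operatorname{Pic}(X))$, $g\mapsto(g^\ast)^{-1}$; $W$ is the preimage of $J$ under this homomorphism. Let $[D_1],\ldots,[D_s]$ be the distinct linear equivalence classes of the $D_{\rho_j}$ and $n_i$ the number of rays with divisor in class $[D_i]$. For $[D]\in\operatorname{Pic}(X)$, $\langle D\rangle_J:=\sum_{[E]\in J\cdot[D]}[E]$. $\operatorname{Pic}^T(X,J):=\langle n_i\langle D_i\rangle_J\mid1\le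 i\le s\rangle$ and $\operatorname{Am}^T(X,J):=\operatorname{Pic}(X)^J/\operatorname{Pic}^T(X,J)$. *)

From HB Require Import structures.
From mathcomp Require Import all_boot all_order all_algebra all_fingroup.
From Stdlib Require Import ClassicalEpsilon.
Set Implicit Arguments. Unset Strict Implicit. Unset Printing Implicit Defensive.
Import Order.TTheory GRing.Theory Num.Theory.
Local Open Scope ring_scope.

Definition pb (P : Prop) : bool :=
  if excluded_middle_informative P then true else false.

Section Toric.
Variables (n r : nat) (u : 'I_r -> 'rV[int]_n) (cones : {set {set 'I_r}}).

(* <v, m> for v in N = Z^n (row vectors), m in M = Z^n (column vectors) *)
Definition pairing (v : 'rV[int]_n) (m : 'cV[int]_n) : int := (v *m m) 0 0.

Definition ratv (v : 'rV[int]_n) : 'rV[rat]_n := map_mx (fun z : int => z%:~R) v.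

Definition in_cone (s : {set 'I_r}) (x : 'rV[rat]_n) : Prop :=
  exists c : 'I_r -> rat, (forall i, 0 <= c i) /\ (forall i, i \notin s -> c i = 0)
    /\ x = \sum_i c i *: ratv (u i).

(* Sigma is a fan whose cones are the cones on the index sets in [cones],
   with rays exactly the u_i *)
Definition is_fan : Prop :=
  [/\ injective u,
      (forall i, [set i] \in cones),
      (forall s t : {set 'I_r}, s \in cones -> t \subset s -> t \in cones)
    & (forall s t, s \in cones -> t \in cones -> forall x,
          in_cone s x -> in_cone t x -> in_cone (s :&: t) x)].

Definition is_smooth : Prop :=
  forall s, s \in cones -> exists B : 'M[int]_n, exists f : 'I_r -> 'I_n,
    [/\ B \in unitmx, {in s &, injective f} & forall i, i \in s -> row (f i) B = u i].

Definition is_complete : Prop := forall x, exists2 s, s \in cones & in_cone s x.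

(* existence of an ample T-divisor sum_i a_i D_i: strictly convex support
   function (Cox-Little-Schenck, Thm 6.1.14) *)
Definition is_projective : Prop :=
  exists a : 'I_r -> int, forall s, s \in cones -> #|s| = n ->
    exists m : 'cV[int]_n, (forall i, i \in s -> pairing (u i) m = - a i) /\
                           (forall i, i \notin s -> - a i < pairing (u i) m).

Definition smooth_projective_fan : Prop :=
  [/\ is_fan, is_smooth, is_complete & is_projective].

(* Aut(Sigma), realised as the induced permutations of the rays *)
Definition is_autS (p : {perm 'I_r}) : Prop :=
  exists A : 'M[int]_n, [/\ A \in unitmx, (forall i, u i *m A = u (p i))
                          & (forall s, s \in cones -> p @: s \in cones)].

Definition autmx (p : {perm 'I_r}) : 'M[int]_n :=
  epsilon (inhabits 0) (fun A : 'M[int]_n => forall i, u i *m A = u (p i)).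

(* TDiv(X) = Z^{rays}; D_{rho_j} = ediv j *)
Definition ediv (j : 'I_r) : {ffun 'I_r -> int} := [ffun i => (i == j)%:R].
(* principal divisor div(chi^m) = sum_i <m,u_i> D_i ; image of M in TDiv *)
Definition divm (m : 'cV[int]_n) : {ffun 'I_r -> int} := [ffun i => pairing (u i) m].
Definition isM (D : {ffun 'I_r -> int}) : Prop := exists m, D = divm m.
(* left action of p on TDiv (p maps D_{rho_j} to D_{rho_(p^-1 j)}),
   compatible with the left action m |-> autmx p *m m on M *)
Definition tact (p : {perm 'I_r}) (D : {ffun 'I_r -> int}) : {ffun 'I_r -> int} :=
  [ffun i => D (p i)].

Variable W : {group {perm 'I_r}}.

(* H^1(W, M) = Z^1 / B^1 *)
Definition Z1 (f : {ffun {perm 'I_r} -> 'cV[int]_n}) : Prop :=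
  (forall g h, g \in W -> h \in W -> f (g * h)%g = f g + autmx g *m f h) /\
  (forall g, g \notin W -> f g = 0).
Definition B1 (f : {ffun {perm 'I_r} -> 'cV[int]_n}) : Prop :=
  exists m : 'cV[int]_n, forall g, f g = if g \in W then autmx g *m m - m else 0.

(* lifts to TDiv of Pic(X)^J *)
Definition PicJ (D : {ffun 'I_r -> int}) : Prop :=
  forall p, p \in W -> isM (tact p D - D).
(* lift of the image of TDiv(X)^W in Pic(X) *)
Definition ImTDivW (D : {ffun 'I_r -> int}) : Prop :=
  exists D1 D2, [/\ isM D1, (forall p, p \in W -> tact p D2 = D2) & D = D1 + D2].

(* linear equivalence class of D_{rho_k} (as set of ray indices) *)
Definition cls (k : 'I_r) : {set 'I_r} := [set l | pb (isM (ediv l - ediv k))].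
Definition orbcls (j : 'I_r) : {set {set 'I_r}} := [set cls (p j) | p : {perm 'I_r} in W].
Definition clsrep (C : {set 'I_r}) : {ffun 'I_r -> int} :=
  if [pick l in C] is Some l then ediv l else 0.
(* < D_{rho_j} >_J, lifted to TDiv *)
Definition orbsum (j : 'I_r) : {ffun 'I_r -> int} := \sum_(C in orbcls j) clsrep C.
(* lift of Pic^T(X,J) = < n_i < D_i >_J > *)
Definition PicT (D : {ffun 'I_r -> int}) : Prop :=
  exists D1 (c : 'I_r -> int),
    isM D1 /\ D = D1 + \sum_j (orbsum j *+ #|cls j|) *~ c j.

End Toric.

(* A1/B1 is isomorphic as an abelian group to A2/B2 (A_k subgroups, B_k <= A_k);
   f is any set-theoretic lift of the isomorphism *)
Definition quot_iso (T1 T2 : zmodType) (A1 B1 : T1 -> Prop) (A2 B2 : T2 -> Prop) : Prop :=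
  exists f : T1 -> T2,
   [/\ (forall x, A1 x -> A2 (f x)),
       (forall x y, A1 x -> A1 y -> B2 (f (x - y) - (f x - f y))),
       (forall x, A1 x -> (B2 (f x) <-> B1 x))
     & (forall y, A2 y -> exists2 x, A1 x & B2 (f x - y))].

(* W acts compatibly on 0 -> M -> TDiv(X) -> Pic(X) -> 0, and TDiv(X) is a
   permutation module, so H^1(W, TDiv(X)) = 0: a cocycle vanishes on
   stabilisers (they are finite and Z is torsion free), hence is a coboundary.
   The long exact sequence identifies H^1(W, M) with the cokernel of
   TDiv(X)^W -> Pic(X)^J; a cocycle c corresponds to a divisor D with
   g D - D = div(chi^(c g)).
   TDiv(X)^W is spanned by the W-orbit sums of the D_rho. On a smooth complete
   fan, if D_k ~ D_l then the reflection exchanging u_k and u_l is a fan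
   automorphism acting trivially on Pic(X), so it lies in W. Thus every linear
   equivalence class lies in one W-orbit, the classes in an orbit all have the
   same size n_i, and the orbit sum is linearly equivalent to n_i <D_i>_J: the
   image of TDiv(X)^W in Pic(X) is Pic^T(X,J). *)

From HB Require Import structures.
From mathcomp Require Import all_boot all_order all_algebra all_fingroup.
From Stdlib Require Import ClassicalEpsilon.
From mathcomp.algebra_tactics Require Import lra.
Set Implicit Arguments. Unset Strict Implicit. Unset Printing Implicit Defensive.
Import GRing.Theory Num.Theory.
Local Open Scope ring_scope.

Section OrbitRepresentatives.
Variables (I : finType) (W : {group {perm I}}).

Definition orbit_rep (i : I) : I := odflt i [pick j in orbit 'P W i].

Lemma orbit_rep_in i : orbit_rep i \in orbit 'P W i.
Proof. by rewrite /orbit_rep; case: pickP => [//|/(_ i)]; rewrite orbit_refl. Qed.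

Lemma orbit_rep_eq i j : j \in orbit 'P W i -> orbit_rep j = orbit_rep i.
Proof.
move/orbit_eqP=> Eji; rewrite /orbit_rep Eji.
by case: pickP => [//|/(_ i)]; rewrite orbit_refl.
Qed.

Lemma orbit_rep_act g i : g \in W -> orbit_rep (g i) = orbit_rep i.
Proof. by move=> Wg; apply/orbit_rep_eq/(mem_orbit 'P i Wg). Qed.

Definition orbit_transporter (i : I) : {perm I} :=
  odflt 1%g [pick g in W | g (orbit_rep i) == i].

Lemma orbit_transporterP i :
  orbit_transporter i \in W /\ orbit_transporter i (orbit_rep i) = i.
Proof.
rewrite /orbit_transporter; case: pickP => [g /andP[Wg /eqP//] | no_g].
have /orbitP[g Wg /= gi] : i \in orbit 'P W (orbit_rep i).
  by rewrite orbit_sym orbit_rep_in.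
by move: (no_g g); rewrite /= Wg -/(aperm _ g) gi eqxx.
Qed.

Definition orbit_indicator (j : I) : {ffun I -> int} :=
  [ffun i => (i \in orbit 'P W j)%:R].

Lemma invariant_orbit_decomposition (D : {ffun I -> int}) :
  (forall g i, g \in W -> D (g i) = D i) ->
  D = \sum_j orbit_indicator j *~ (if orbit_rep j == j then D j else 0).
Proof.
move=> Dinv; apply/ffunP => i; rewrite sum_ffunE.
have rep_i := orbit_rep_in i.
rewrite (bigD1 (orbit_rep i)) //= big1 ?addr0 => [|j ne_j].
  rewrite ffunMzE ffunE orbit_sym rep_i (orbit_rep_eq rep_i) eqxx mulrzz mul1r.
  by case/orbitP: rep_i => g Wg <-; rewrite Dinv.
rewrite ffunMzE ffunE; case: (boolP (i \in _)) => [ij|]; last by rewrite mul0rz.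
by rewrite -(orbit_rep_eq ij) eq_sym (negbTE ne_j) mulr0z.
Qed.

End OrbitRepresentatives.

Section PermutationCocycles.
Variables (I : finType) (R : numDomainType) (W : {group {perm I}}).
Variable phi : {perm I} -> I -> R.
Hypothesis phiM : forall g h i, g \in W -> h \in W ->
  phi (g * h)%g i = phi g i + phi h (g i).

Lemma perm_cocycle1 i : phi 1%g i = 0.
Proof.
by move: (phiM i (group1 W) (group1 W)); rewrite mulg1 perm1 -{1}[phi _ i]addr0 => /addrI.
Qed.

Lemma perm_cocycle_stab s i : s \in W -> s i = i -> phi s i = 0.
Proof.
move=> Ws si.
have phiX k : phi (s ^+ k)%g i = phi s i *+ k.
  elim: k => [|k IHk]; first by rewrite expg0 perm_cocycle1.
  by rewrite expgS phiM ?groupX // si IHk mulrS.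
move: (phiX #[s]%g); rewrite expg_order perm_cocycle1 => /esym/eqP.
by rewrite mulrn_eq0 eqn0Ngt order_gt0 => /eqP.
Qed.

Lemma perm_cocycle_eq h h' i : h \in W -> h' \in W -> h i = h' i -> phi h i = phi h' i.
Proof.
move=> Wh Wh' hi; set s := (h' * h^-1)%g.
have Ws : s \in W by rewrite groupM ?groupV.
have si : s i = i by rewrite permM -hi permK.
by rewrite -(mulgKV h h') -/s phiM // (perm_cocycle_stab Ws si) si add0r.
Qed.

Lemma perm_cocycle_coboundary :
  exists D : {ffun I -> R}, forall g i, g \in W -> phi g i = D (g i) - D i.
Proof.
pose t := orbit_transporter W.
exists [ffun i => phi (t i) (orbit_rep W i)] => g i Wg; rewrite !ffunE orbit_rep_act //.
have [Wti ti] := orbit_transporterP W i.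
have [Wtgi tgi] := orbit_transporterP W (g i); rewrite orbit_rep_act // in tgi.
rewrite -(@perm_cocycle_eq (t i * g)%g (t (g i))) ?groupM ?permM ?ti //.
by rewrite phiM // ti addrC addKr.
Qed.

End PermutationCocycles.

Section ToricLattice.
Variables (n r : nat) (u : 'I_r -> 'rV[int]_n) (cones : {set {set 'I_r}}).
Implicit Types (p h : {perm 'I_r}) (D : {ffun 'I_r -> int}) (m : 'cV[int]_n).

Lemma ratv_mulmx k (v : 'rV[int]_n) (X : 'M[int]_(n, k)) :
  map_mx (fun z : int => z%:~R : rat) (v *m X) =
  ratv v *m map_mx (fun z : int => z%:~R : rat) X.
Proof. exact: map_mxM. Qed.

Lemma rays_mulmx_inj k (X Y : 'M[int]_(n, k)) : is_complete u cones ->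
  (forall i, u i *m X = u i *m Y) -> X = Y.
Proof.
move=> Hcomp uXY; apply/eqP; rewrite -subr_eq0; apply/eqP.
set Xr := map_mx (fun z : int => z%:~R : rat) (X - Y).
have Xr0 : Xr = 0.
  apply/row_matrixP => j; rewrite rowE row0.
  have [s _ [c [_ [_ ->]]]] := Hcomp (delta_mx 0 j).
  rewrite mulmx_suml big1 // => i _.
  by rewrite -scalemxAl -ratv_mulmx mulmxBr uXY subrr map_mx0 scaler0.
apply/matrixP => i j; move/matrixP/(_ i j): Xr0.
by rewrite !mxE => /eqP; rewrite intr_eq0 => /eqP.
Qed.

Fact divm_is_zmod_morphism : zmod_morphism (divm u).
Proof. by move=> m1 m2; apply/ffunP => i; rewrite !ffunE /pairing mulmxBr !mxE. Qed.
HB.instance Definition _ :=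
  GRing.isZmodMorphism.Build _ _ (divm u) divm_is_zmod_morphism.

Lemma divm_inj : is_complete u cones -> injective (divm u).
Proof.
move=> Hcomp m1 m2 Em; apply: (rays_mulmx_inj Hcomp) => i.
apply/matrixP => a b; rewrite !ord1.
by move/ffunP/(_ i): Em; rewrite !ffunE.
Qed.

Lemma isM_divm m : isM u (divm u m).
Proof. by exists m. Qed.

Lemma isM0 : isM u 0.
Proof. by exists 0; rewrite raddf0. Qed.

Lemma isMB D1 D2 : isM u D1 -> isM u D2 -> isM u (D1 - D2).
Proof. by move=> [m1 ->] [m2 ->]; rewrite -raddfB; apply: isM_divm. Qed.

Lemma isMN D : isM u D -> isM u (- D).
Proof. by move=> MD; rewrite -sub0r; apply: isMB MD; apply: isM0. Qed.

Lemma isMD D1 D2 : isM u D1 -> isM u D2 -> isM u (D1 + D2).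
Proof. by move=> MD1 /isMN MD2; rewrite -[D2]opprK; apply: isMB. Qed.

Lemma isMMz D z : isM u D -> isM u (D *~ z).
Proof. by move=> [m ->]; rewrite -raddfMz; apply: isM_divm. Qed.

Lemma isM_sum (J : finType) (P : pred J) (F : J -> {ffun 'I_r -> int}) :
  (forall j, P j -> isM u (F j)) -> isM u (\sum_(j | P j) F j).
Proof. by move=> MF; elim/big_ind: _ => //; [apply: isM0 | apply: isMD]. Qed.

Lemma autmxP p : is_autS u cones p -> forall i, u i *m autmx u p = u (p i).
Proof.
move=> [A [_ uA _]].
by apply: (epsilon_spec (inhabits 0) (fun A => forall i, u i *m A = u (p i))); exists A.
Qed.

Fact tact_is_zmod_morphism p : zmod_morphism (@tact r p).
Proof. by move=> D1 D2; apply/ffunP => i; rewrite !ffunE. Qed.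
HB.instance Definition _ p :=
  GRing.isZmodMorphism.Build _ _ (@tact r p) (tact_is_zmod_morphism p).

Lemma tactM p h D : tact (p * h)%g D = tact p (tact h D).
Proof. by apply/ffunP => i; rewrite !ffunE permM. Qed.

Lemma tact_ediv p j : tact p (ediv j) = ediv (p^-1 j)%g.
Proof. by apply/ffunP => i; rewrite !ffunE (canF_eq (permK p)). Qed.

Lemma tact_divm p m : is_autS u cones p -> tact p (divm u m) = divm u (autmx u p *m m).
Proof. by move=> Ap; apply/ffunP => i; rewrite !ffunE /pairing mulmxA autmxP. Qed.

Lemma isM_tact p D : is_autS u cones p -> isM u D -> isM u (tact p D).
Proof. by move=> Ap [m ->]; rewrite tact_divm //; apply: isM_divm. Qed.

End ToricLattice.

Section FirstIsomorphism.
Variables (n r : nat) (u : 'I_r -> 'rV[int]_n) (cones : {set {set 'I_r}}).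
Hypothesis Hcomp : is_complete u cones.
Variable W : {group {perm 'I_r}}.
Hypothesis HW : forall p, p \in W -> is_autS u cones p.
Implicit Types (g h : {perm 'I_r}) (D : {ffun 'I_r -> int}).
Implicit Types (m : 'cV[int]_n) (c : {ffun {perm 'I_r} -> 'cV[int]_n}).

Lemma ImTDivW_invariant D1 D2 : isM u D1 ->
  (forall g, g \in W -> tact g D2 = D2) -> ImTDivW u W (D1 + D2).
Proof. by move=> MD1 D2inv; exists D1, D2. Qed.

Lemma coboundaryB g D1 D2 :
  tact g (D1 - D2) - (D1 - D2) = (tact g D1 - D1) - (tact g D2 - D2).
Proof. by rewrite raddfB opprD addrACA -opprD. Qed.

Lemma eq_coboundary_invariant D1 D2 :
  (forall g, g \in W -> tact g D1 - D1 = tact g D2 - D2) ->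
  forall g, g \in W -> tact g (D1 - D2) = D1 - D2.
Proof. by move=> E g Wg; apply/eqP; rewrite -subr_eq0 coboundaryB E // subrr. Qed.

Lemma Z1B c1 c2 : Z1 u W c1 -> Z1 u W c2 -> Z1 u W (c1 - c2).
Proof.
move=> [c1M c1W] [c2M c2W]; split=> [g h Wg Wh|g Wg]; rewrite !ffunE.
  by rewrite c1M // c2M // mulmxBr opprD addrACA.
by rewrite c1W // c2W // subrr.
Qed.

(* the inverse of the connecting map Pic(X)^J -> H^1(W, M) *)
Definition cocycle_divisor c : {ffun 'I_r -> int} :=
  epsilon (inhabits 0) (fun D => forall g, g \in W -> tact g D - D = divm u (c g)).

Lemma cocycle_divisorP c : Z1 u W c ->
  forall g, g \in W -> tact g (cocycle_divisor c) - cocycle_divisor c = divm u (c g).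
Proof.
move=> [cM _].
have [|D dD] := @perm_cocycle_coboundary _ _ W (fun g => divm u (c g)).
  by move=> g h i Wg Wh; rewrite cM // raddfD /= -(tact_divm _ (HW Wg)) !ffunE.
apply: (epsilon_spec (inhabits 0) (fun D => forall g, g \in W -> tact g D - D = divm u (c g))).
by exists D => g Wg; apply/ffunP => i; rewrite dD // !ffunE.
Qed.

Lemma cocycle_divisor_PicJ c : Z1 u W c -> PicJ u W (cocycle_divisor c).
Proof. by move=> Zc g Wg; rewrite cocycle_divisorP //; apply: isM_divm. Qed.

Lemma cocycle_divisorB c1 c2 : Z1 u W c1 -> Z1 u W c2 ->
  ImTDivW u W (cocycle_divisor (c1 - c2) - (cocycle_divisor c1 - cocycle_divisor c2)).
Proof.
move=> Zc1 Zc2; rewrite -[X in ImTDivW _ _ X]add0r.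
apply: (ImTDivW_invariant (isM0 u)); apply: eq_coboundary_invariant => g Wg.
by rewrite (cocycle_divisorP (Z1B Zc1 Zc2)) // coboundaryB !cocycle_divisorP // !ffunE raddfB.
Qed.

Lemma cocycle_divisor_B1 c : Z1 u W c -> ImTDivW u W (cocycle_divisor c) <-> B1 u W c.
Proof.
move=> Zc; split=> [[_ [D2 [[m ->] D2inv cdE]]] | [m cE]].
  exists m => g; case: ifP => Wg; last by apply: Zc.2; rewrite Wg.
  apply: (divm_inj Hcomp); rewrite -cocycle_divisorP // cdE.
  by rewrite raddfD /= D2inv // raddfB /= -(tact_divm _ (HW Wg)) opprD addrACA subrr addr0.
have -> : cocycle_divisor c = divm u m + (cocycle_divisor c - divm u m) by rewrite addrC subrK.
apply: ImTDivW_invariant (isM_divm u m) _; apply: eq_coboundary_invariant => g Wg.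
by rewrite cocycle_divisorP // cE Wg raddfB (tact_divm _ (HW Wg)).
Qed.

Lemma cocycle_divisor_onto D : PicJ u W D ->
  exists2 c, Z1 u W c & ImTDivW u W (cocycle_divisor c - D).
Proof.
move=> PD; pose m_of g := epsilon (inhabits 0) (fun m => tact g D - D = divm u m).
have m_ofP g : g \in W -> tact g D - D = divm u (m_of g).
  by move=> Wg; apply: (epsilon_spec (inhabits 0) (fun m => _ = divm u m)) (PD g Wg).
pose c := [ffun g => if g \in W then m_of g else 0].
have Zc : Z1 u W c.
  split=> [g h Wg Wh|g /negbTE nWg]; rewrite !ffunE ?groupM ?Wg ?Wh ?nWg //.
  apply: (divm_inj Hcomp); rewrite raddfD /= -(tact_divm _ (HW Wg)) -!m_ofP ?groupM //.
  by rewrite tactM raddfB [RHS]addrC addrA subrK.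
exists c => //; rewrite -[X in ImTDivW _ _ X]add0r.
apply: (ImTDivW_invariant (isM0 u)); apply: eq_coboundary_invariant => g Wg.
by rewrite cocycle_divisorP // ffunE Wg -m_ofP.
Qed.

Lemma H1_coker_iso : quot_iso (Z1 u W) (B1 u W) (PicJ u W) (ImTDivW u W).
Proof.
exists cocycle_divisor; split.
- exact: cocycle_divisor_PicJ.
- exact: cocycle_divisorB.
- exact: cocycle_divisor_B1.
- exact: cocycle_divisor_onto.
Qed.

End FirstIsomorphism.

Lemma sum_mulr_delta (R : pzRingType) (I : finType) (c : I -> R) (j : I) :
  \sum_i c i * (i == j)%:R = c j.
Proof. by rewrite (bigD1 j) //= eqxx mulr1 big1 ?addr0 // => i /negbTE ->; rewrite mulr0. Qed.

Lemma tperm_imset_swap (I : finType) (k l : I) (s : {set I}) :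
  k \in s -> l \notin s -> tperm k l @: s = s :\ k :|: [set l].
Proof.
move=> ks ls; have kl : k != l by apply: contraNneq ls => <-.
apply/setP => i; rewrite -[i in LHS](tpermK k l) mem_imset; last exact: perm_inj.
rewrite !inE; case: tpermP => [->|->|/eqP ik /eqP il].
- by rewrite eqxx (negbTE ls) (negbTE kl).
- by rewrite eqxx ks orbT.
- by rewrite ik (negbTE il) orbF.
Qed.

Lemma tperm_imset_id (I : finType) (k l : I) (s : {set I}) :
  (k \in s) = (l \in s) -> tperm k l @: s = s.
Proof.
move=> kls; apply/setP => i; rewrite -[i in LHS](tpermK k l) mem_imset; last exact: perm_inj.
by case: tpermP => [->|->|].
Qed.

Section SmoothCompleteFan.
Variables (n r : nat) (u : 'I_r -> 'rV[int]_n) (cones : {set {set 'I_r}}).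
Hypotheses (Hfan : is_fan u cones) (Hsmooth : is_smooth u cones).
Hypothesis Hcomp : is_complete u cones.

Local Notation ratmx := (map_mx (fun z : int => z%:~R : rat)).

Lemma smooth_cone_free s (e : 'I_r -> rat) : s \in cones ->
  (forall i, i \notin s -> e i = 0) -> \sum_i e i *: ratv (u i) = 0 ->
  forall j, j \in s -> e j = 0.
Proof.
move=> s_cone e_s sum0 j sj.
have [B [f [Bunit f_inj Brow]]] := Hsmooth s_cone.
set x : 'rV[rat]_n := \sum_i e i *: delta_mx 0 (f i).
have xB0 : x *m ratmx B = 0.
  rewrite -sum0 mulmx_suml; apply: eq_bigr => i _.
  case: (boolP (i \in s)) => si; last by rewrite e_s // !scale0r mul0mx.
  by rewrite -scalemxAl -rowE -map_row Brow.
have BQunit : ratmx B \in unitmx by rewrite unitmxE det_map_mx rmorph_unit // -unitmxE.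
have x0 : x = 0 by rewrite -(mulmxK BQunit x) xB0 mul0mx.
move/matrixP/(_ 0 (f j)): x0; rewrite mxE summxE.
rewrite (bigD1 j) //= big1 ?mxE ?eqxx ?mulr1 ?addr0 // => i ij; rewrite !mxE.
case: (boolP (i \in s)) => si; last by rewrite e_s // mul0r.
by rewrite (inj_in_eq f_inj) // eq_sym (negbTE ij) mulr0.
Qed.

Lemma cone_indicator_subset t s : t \in cones -> s \in cones ->
  in_cone u s (\sum_i (i \in t)%:R *: ratv (u i)) -> t \subset s.
Proof.
move=> t_cone s_cone w_s; have [_ _ _ cone_meet] := Hfan.
have w_t : in_cone u t (\sum_i (i \in t)%:R *: ratv (u i)).
  by exists (fun i => (i \in t)%:R); split=> [i|]; [rewrite ler0n | split=> // i /negbTE ->].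
have [b [_ [b_st wE]]] := cone_meet s t s_cone t_cone _ w_s w_t.
have e_t : forall j, j \in t -> (j \in t)%:R - b j = 0.
  apply: (@smooth_cone_free t (fun i => (i \in t)%:R - b i)) => // [i ti|].
    by rewrite (negbTE ti) b_st ?subrr // inE (negbTE ti) andbF.
  by under eq_bigr do rewrite scalerBl; rewrite sumrB -wE subrr.
have b1 j : j \in t -> b j = 1.
  by move=> tj; move/eqP: (e_t j tj); rewrite tj subr_eq0 => /eqP <-.
apply/subsetP => j tj; apply: contraT => sj; move: (b1 j tj).
by rewrite b_st ?inE ?(negbTE sj) // => /eqP; rewrite eq_sym oner_eq0.
Qed.

Section Swap.
Variables (k l : 'I_r) (m : 'cV[int]_n).
Hypotheses (kl : k != l) (Em : ediv l - ediv k = divm u m).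

Lemma swap_pairing i : pairing (u i) m = (i == l)%:R - (i == k)%:R.
Proof. by move/ffunP/(_ i): Em; rewrite !ffunE. Qed.

Lemma swap_combination (c : 'I_r -> rat) :
  ((\sum_i c i *: ratv (u i)) *m ratmx m) 0 0 = c l - c k.
Proof.
rewrite mulmx_suml summxE -(sum_mulr_delta c l) -(sum_mulr_delta c k) -sumrB.
apply: eq_bigr => i _; rewrite -scalemxAl mxE -ratv_mulmx mxE -/(pairing _ _) swap_pairing.
by rewrite intrB !mulrz_nat mulrBr.
Qed.

(* Place x := u l + sum_(i in t) u i in a cone s2 with coefficients a. Pairing
   with m gives a l = 1 + a k > 0, so l \in s2 and x - u l, the sum of the rays
   of t, lies in the cone s2, whence t \subset s2. *)
Lemma swap_cone s : s \in cones -> l \notin s -> s :\ k :|: [set l] \in cones.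
Proof.
move=> s_cone ls; have [_ _ face_cone _] := Hfan.
set t := s :\ k; have t_cone : t \in cones by apply: face_cone s_cone (subD1set s k).
have lt : l \notin t by rewrite !inE negb_and ls orbT.
have kt : k \notin t by rewrite !inE eqxx.
pose cx i : rat := (i == l)%:R + (i \in t)%:R.
have [s2 s2_cone [a [a_ge0 [a_s2 xE]]]] := Hcomp (\sum_i cx i *: ratv (u i)).
have al : a l = 1 + a k.
  move: (swap_combination cx); rewrite xE swap_combination /cx.
  rewrite eqxx (negbTE lt) (negbTE kl) (negbTE kt) addr0 subr0 => /eqP.
  by rewrite subr_eq => /eqP.
have ls2 : l \in s2 by apply: contraT => /a_s2 al0; have := a_ge0 k; lra.
have t_s2 : t \subset s2.
  apply: cone_indicator_subset => //.
  exists (fun i => a i - (i == l)%:R); split=> [i|].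
    by case: eqP => [->|_]; rewrite ?subr0 ?a_ge0 // al addrC addKr a_ge0.
  split=> [i s2i|]; first by rewrite a_s2 //; case: eqP => [il|]; rewrite ?subr0 // il ls2 in s2i.
  under [RHS]eq_bigr do rewrite scalerBl; rewrite sumrB -xE -sumrB.
  by apply: eq_bigr => i _; rewrite -scalerBl /cx addrC addKr.
by apply: face_cone s2_cone _; rewrite subUset sub1set ls2 t_s2.
Qed.

(* the reflection x |-> x - <x, m> (u l - u k) of N exchanges u k and u l *)
Lemma tperm_rays i : u i *m (1%:M - m *m (u l - u k)) = u (tperm k l i).
Proof.
rewrite mulmxBr mulmx1 mulmxA (mx11_scalar (u i *m m)) mul_scalar_mx.
rewrite -/(pairing _ _) swap_pairing; case: tpermP => [->|->|/eqP ik /eqP il].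
- by rewrite eqxx (negbTE kl) sub0r scaleN1r opprK addrC subrK.
- by rewrite eqxx eq_sym (negbTE kl) subr0 scale1r opprB addrC subrK.
- by rewrite (negbTE ik) (negbTE il) subrr scale0r subr0.
Qed.

End Swap.

Lemma tperm_autS k l : k != l -> isM u (ediv l - ediv k) -> is_autS u cones (tperm k l).
Proof.
move=> kl [m Em]; have Em' : ediv k - ediv l = divm u (- m) by rewrite raddfN /= -Em opprB.
have AA : (1%:M - m *m (u l - u k)) *m (1%:M - m *m (u l - u k)) = 1%:M.
  by apply: (rays_mulmx_inj Hcomp) => i; rewrite mulmxA !(tperm_rays kl Em) tpermK mulmx1.
exists (1%:M - m *m (u l - u k)); split; first by case: (mulmx1_unit AA).
  exact: tperm_rays.
move=> s s_cone; case: (boolP (k \in s)) => ks; case: (boolP (l \in s)) => ls.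
- by rewrite tperm_imset_id ?ks ?ls.
- by rewrite tperm_imset_swap // (swap_cone kl Em).
- by rewrite tpermC tperm_imset_swap // (swap_cone _ Em') // eq_sym.
- by rewrite tperm_imset_id ?(negbTE ks) ?(negbTE ls).
Qed.

End SmoothCompleteFan.

Lemma pbP (P : Prop) : pb P <-> P.
Proof. by rewrite /pb; case: excluded_middle_informative. Qed.

Section LinearEquivalenceClasses.
Variables (n r : nat) (u : 'I_r -> 'rV[int]_n) (cones : {set {set 'I_r}}).
Hypotheses (Hfan : is_fan u cones) (Hsmooth : is_smooth u cones).
Hypothesis Hcomp : is_complete u cones.
Variable W : {group {perm 'I_r}}.
Hypothesis HW : forall p, p \in W -> is_autS u cones p.
Hypothesis Hker : forall p, is_autS u cones p ->
  (forall D, isM u (tact p D - D)) -> p \in W.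
Implicit Types (p : {perm 'I_r}) (D : {ffun 'I_r -> int}).

Lemma mem_cls k l : l \in cls u k <-> isM u (ediv l - ediv k).
Proof. by rewrite inE; apply: pbP. Qed.

Lemma cls_refl k : k \in cls u k.
Proof. by apply/mem_cls; rewrite subrr; apply: isM0. Qed.

Lemma cls_eq k l : l \in cls u k -> cls u l = cls u k.
Proof.
move=> /mem_cls Mlk; apply/setP => i; apply/idP/idP => /mem_cls Mi; apply/mem_cls.
  by have := isMD Mi Mlk; rewrite addrA subrK.
by have := isMB Mi Mlk; rewrite opprB addrA subrK.
Qed.

Lemma tact_tperm k l D : k != l ->
  tact (tperm k l) D - D = (ediv k - ediv l) *~ (D l - D k).
Proof.
move=> kl; apply/ffunP => i; rewrite ffunMzE !ffunE mulrzz.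
case: tpermP => [->|->|/eqP ik /eqP il].
- by rewrite eqxx (negbTE kl) subr0 mul1r.
- by rewrite eqxx eq_sym (negbTE kl) sub0r mulN1r opprB.
- by rewrite (negbTE ik) (negbTE il) subrr mul0r.
Qed.

Lemma cls_sub_orbit k : cls u k \subset orbit 'P W k.
Proof.
apply/subsetP => l /mem_cls Mlk; case: (eqVneq k l) => [<-|kl]; first exact: orbit_refl.
have Wkl : tperm k l \in W.
  apply: Hker => [|D]; first exact: tperm_autS.
  by rewrite tact_tperm //; apply/isMMz; rewrite -opprB; apply: isMN.
by have := mem_orbit 'P k Wkl; rewrite /= /aperm tpermL.
Qed.

Lemma cls_act p k l : p \in W -> l \in cls u k -> p l \in cls u (p k).
Proof.
move=> Wp /mem_cls Mlk; apply/mem_cls.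
by have := isM_tact (HW (groupVr Wp)) Mlk; rewrite raddfB /= !tact_ediv invgK.
Qed.

Lemma imset_cls p k : p \in W -> p @: cls u k = cls u (p k).
Proof.
move=> Wp; apply/setP => l; apply/imsetP/idP => [[j kj ->]|pkl]; first exact: cls_act.
exists (p^-1 l)%g; last by rewrite permKV.
by have := cls_act (groupVr Wp) pkl; rewrite permK.
Qed.

Lemma card_cls p k : p \in W -> #|cls u (p k)| = #|cls u k|.
Proof. by move=> Wp; rewrite -imset_cls // card_imset //; apply: perm_inj. Qed.

Lemma tact_orbit_indicator p j : p \in W -> tact p (orbit_indicator W j) = orbit_indicator W j.
Proof. by move=> Wp; apply/ffunP => i; rewrite !ffunE (orbit_actr 'P j i Wp). Qed.

Lemma orbit_indicatorE j : orbit_indicator W j = \sum_(i in orbit 'P W j) ediv i.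
Proof.
apply/ffunP => x; rewrite sum_ffunE ffunE.
under eq_bigr do rewrite ffunE.
case: (boolP (x \in orbit 'P W j)) => jx.
  by rewrite (bigD1 x) //= eqxx big1 ?addr0 // => i /andP[_]; rewrite eq_sym => /negbTE ->.
by rewrite big1 // => i ji; case: eqP => // xi; rewrite xi ji in jx.
Qed.

Lemma cover_orbcls j : cover (orbcls u W j) = orbit 'P W j.
Proof.
apply/setP => x; apply/bigcupP/idP => [[C /imsetP[p Wp ->] Cx] | /orbitP[p Wp <-]].
  by rewrite -(orbit_act 'P j Wp); apply: (subsetP (cls_sub_orbit _)).
by exists (cls u (p j)); [apply/imsetP; exists p | apply: cls_refl].
Qed.

Lemma trivIset_orbcls j : trivIset (orbcls u W j).
Proof.
apply/trivIsetP => _ _ /imsetP[p _ ->] /imsetP[q _ ->] neq_pq.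
rewrite -setI_eq0; apply: contraNT neq_pq => /set0Pn[x /setIP[px qx]].
by rewrite -(cls_eq px) -(cls_eq qx).
Qed.

(* the orbit of j is partitioned into linear equivalence classes, all of size #|cls u j| *)
Lemma orbit_indicator_orbsum j :
  isM u (orbit_indicator W j - orbsum u W j *+ #|cls u j|).
Proof.
rewrite orbit_indicatorE -cover_orbcls (big_trivIset _ (trivIset_orbcls j)).
rewrite /orbsum -sumrMnl -sumrB; apply: isM_sum => _ /imsetP[p Wp ->].
rewrite -(card_cls j Wp) /clsrep; case: pickP => [l pjl|/(_ (p j))]; last by rewrite cls_refl.
rewrite -sumr_const -sumrB; apply: isM_sum => i pji; apply/mem_cls.
by rewrite (cls_eq pjl) -(cls_eq pji) cls_refl.
Qed.

Lemma ImTDivW_orbit_indicators D : ImTDivW u W D <->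
  exists c : 'I_r -> int, isM u (D - \sum_j orbit_indicator W j *~ c j).
Proof.
split=> [[D1 [D2 [MD1 D2inv ->]]] | [c Mc]].
  exists (fun j => if orbit_rep W j == j then D2 j else 0).
  rewrite -invariant_orbit_decomposition ?addrK // => g i Wg.
  by move/ffunP/(_ i): (D2inv g Wg); rewrite ffunE.
exists (D - \sum_j orbit_indicator W j *~ c j), (\sum_j orbit_indicator W j *~ c j).
split=> //; last by rewrite subrK.
move=> p Wp; rewrite raddf_sum; apply: eq_bigr => j _.
by rewrite raddfMz /= tact_orbit_indicator.
Qed.

Lemma PicT_orbsums D : PicT u W D <->
  exists c : 'I_r -> int, isM u (D - \sum_j (orbsum u W j *+ #|cls u j|) *~ c j).
Proof.
split=> [[D1 [c [MD1 ->]]] | [c Mc]]; first by exists c; rewrite addrK.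
by exists (D - \sum_j (orbsum u W j *+ #|cls u j|) *~ c j), c; rewrite subrK.
Qed.

Lemma ImTDivW_PicT D : ImTDivW u W D <-> PicT u W D.
Proof.
have gap (c : 'I_r -> int) : isM u (\sum_j orbit_indicator W j *~ c j -
                                     \sum_j (orbsum u W j *+ #|cls u j|) *~ c j).
  by rewrite -sumrB; apply: isM_sum => j _; rewrite -mulrzBl; apply/isMMz/orbit_indicator_orbsum.
split=> [/ImTDivW_orbit_indicators[c Mc] | /PicT_orbsums[c Mc]].
  by apply/PicT_orbsums; exists c; have := isMD Mc (gap c); rewrite addrA subrK.
by apply/ImTDivW_orbit_indicators; exists c; have := isMB Mc (gap c); rewrite opprB addrA subrK.
Qed.

End LinearEquivalenceClasses.

Lemma quot_iso_eq (T : zmodType) (A B B' : T -> Prop) :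
  B 0 -> (forall x, B x <-> B' x) -> quot_iso A B A B'.
Proof.
move=> B0 BB'; have B'0 : B' 0 by apply/BB'.
exists id; split=> // [x y _ _ | x _ | y Ay]; first by rewrite subrr.
  exact: iff_sym (BB' x).
by exists y; rewrite ?subrr.
Qed.

Theorem lemma6p3 (n r : nat) (u : 'I_r -> 'rV[int]_n)
    (cones : {set {set 'I_r}}) (W : {group {perm 'I_r}}) :
  smooth_projective_fan u cones ->
  (* W is contained in Aut(Sigma) ... *)
  (forall p, p \in W -> is_autS u cones p) ->
  (* ... and contains the kernel of Aut(Sigma) -> Aut(Pic X), i.e. W is the
     preimage of the subgroup J := image of W of AutP(X) *)
  (forall p, is_autS u cones p ->
     (forall D, isM u (tact p D - D)) -> p \in W) ->
  quot_iso (Z1 u W) (B1 u W) (PicJ u W) (ImTDivW u W) /\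
  quot_iso (PicJ u W) (ImTDivW u W) (PicJ u W) (PicT u W).
Proof.
move=> [Hfan Hsmooth Hcomp _] HW Hker; split; first exact: (H1_coker_iso Hcomp HW).
apply: quot_iso_eq => [|D]; last exact: (ImTDivW_PicT Hfan Hsmooth Hcomp HW Hker).
rewrite -[0]addr0; apply: (ImTDivW_invariant (isM0 u)) => g _.
exact: raddf0.
Qed.
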